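(* Let $a,b>0$ and $\alpha\in\,]0,\pi/2]$ satisfy $2b\cos\alpha\leq a\leq b$, and let $p$ be any point of the flat torus $T_{a,b,\alpha}$. Then: <ul> <li>if $\alpha=\pi/2$, we have $\#F_p=\#F_p^4=1$;</li> <li>if $\alpha<\pi/2$, we have $\#F_p=\#F_p^3=2$.</li> </ul>
   Context: For $a,b>0$ and $\alpha\in\,]0,\pi/2]$, $T_{a,b,\alpha}$ is the flat torus $\mathbb{R}^2/\Lambda$, where $\Lambda$ is the group of translations generated by $(a,0)$ and $(b\cos\alpha,b\sin\alpha)$. Equivalently, it is the parallelogram with sides $a,b$ and angle $\alpha$ with opposite sides identified by translation. It carries the induced intrinsic (quotient) distance $d$. For a point $p$, $F_p$ is the set of farthest points from $p$, i.e. the points $q$ with $d(p,q)=\max_x d(p,x)$. A segment is a shortest path. $F_p^n$ is the set of those farthest points from $p$ that are joined to $p$ by exactly $n$ distinct segments. $\#S$ is the cardinality of a set $S$. *)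

From mathcomp Require Import all_boot all_order all_algebra.
From mathcomp Require Import all_classical all_reals all_analysis.
Set Implicit Arguments. Unset Strict Implicit. Unset Printing Implicit Defensive.
Import Order.TTheory GRing.Theory Num.Theory.
Local Open Scope ring_scope.
Local Open Scope classical_set_scope.

(* Points of R^2 are pairs; a point of the torus T_{a,b,alpha} = R^2/Lambda is
   represented by any of its lifts in R^2. *)

Definition lattice_vec (R : realType) (a b alpha : R) (m n : int) : R * R :=
  (m%:~R * a + n%:~R * (b * cos alpha), n%:~R * (b * sin alpha)).

Definition tor_eq (R : realType) (a b alpha : R) (x y : R * R) : Prop :=
  exists m n : int, x.1 - y.1 = (lattice_vec a b alpha m n).1 /\
                    x.2 - y.2 = (lattice_vec a b alpha m n).2.

Definition tor_dist (R : realType) (a b alpha : R) (x y : R * R) : R :=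
  inf [set r : R | exists m n : int,
        r = Num.sqrt ((x.1 - y.1 - (lattice_vec a b alpha m n).1) ^+ 2 +
                      (x.2 - y.2 - (lattice_vec a b alpha m n).2) ^+ 2)].

Definition farthest (R : realType) (a b alpha : R) (p q : R * R) : Prop :=
  forall x : R * R, tor_dist a b alpha p x <= tor_dist a b alpha p q.

Definition segment (R : realType) (a b alpha : R) (p q : R * R)
    (g : R -> R * R) : Prop :=
  let L := tor_dist a b alpha p q in
  tor_eq a b alpha (g 0) p /\ tor_eq a b alpha (g L) q /\
  forall s t : R, 0 <= s <= L -> 0 <= t <= L ->
    tor_dist a b alpha (g s) (g t) = `|s - t|.

Definition same_segment (R : realType) (a b alpha : R) (p q : R * R)
    (g h : R -> R * R) : Prop :=
  forall t : R, 0 <= t <= tor_dist a b alpha p q ->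
    tor_eq a b alpha (g t) (h t).

Definition n_segments (R : realType) (a b alpha : R) (p q : R * R) (n : nat) :
    Prop :=
  exists gs : 'I_n -> (R -> R * R),
    (forall i, segment a b alpha p q (gs i)) /\
    (forall i j, same_segment a b alpha p q (gs i) (gs j) -> i = j) /\
    (forall g, segment a b alpha p q g ->
       exists i, same_segment a b alpha p q g (gs i)).

Definition F (R : realType) (a b alpha : R) (p : R * R) : R * R -> Prop :=
  fun q => farthest a b alpha p q.
Definition Fn (R : realType) (a b alpha : R) (p : R * R) (n : nat) :
    R * R -> Prop :=
  fun q => farthest a b alpha p q /\ n_segments a b alpha p q n.

Definition tor_card (R : realType) (a b alpha : R) (P : R * R -> Prop)
    (k : nat) : Prop :=
  exists qs : 'I_k -> R * R,
    (forall i, P (qs i)) /\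
    (forall i j, tor_eq a b alpha (qs i) (qs j) -> i = j) /\
    (forall x, P x -> exists i, tor_eq a b alpha x (qs i)).

From mathcomp Require Import all_boot all_order all_algebra.
From mathcomp Require Import all_classical all_reals all_analysis.
From mathcomp Require Import zify ring lra.
Import Order.TTheory GRing.Theory Num.Theory.
Local Open Scope ring_scope.

(* In the coordinates of the basis (a, 0), (b cos alpha, b sin alpha) of the
   lattice, the torus is R^2 / Z^2 with the metric of the quadratic form
   Q(x, y) = a^2 x^2 + 2 a b cos alpha x y + b^2 y^2, and the distance from p
   is the Q-distance to the integer lattice.  If c is the Q-circumcentre of a
   lattice triangle p0 p1 p2 with circumradius rho and z = sum l_i p_i is a
   convex combination, then sum l_i Q(z - p_i) = rho^2 - Q(z - c).  Cutting
   the unit square into the triangles (0, e1, e2) and (e1, e2, e1 + e2), the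
   distance to the lattice is therefore at most rho, with equality exactly at
   the two circumcentres, which coincide iff cos alpha = 0.  The hypothesis
   2 b cos alpha <= a <= b makes rho the actual distance from the
   circumcentres to the lattice: no lattice point is closer than the vertices,
   and (1, 1) ties with them only when cos alpha = 0.  Finally every segment
   from 0 to a circumcentre c lifts to the straight segment towards one of the
   nearest lattice representatives of c, so segments are counted by the
   nearest vertices: four when alpha = pi / 2, three otherwise. *)

Lemma scale_pairE (R : realType) (k : R) (z : R * R) : k *: z = (k * z.1, k * z.2).
Proof. by []. Qed.

Lemma inf_eq_min (R : realType) (E : set R) (d : R) :
  E d -> (forall x, E x -> d <= x) -> inf E = d.
Proof.
move=> Ed dE; apply/le_anti/andP; split.
  by apply: ge_inf => //; exists d => x /dE.
by apply: lb_le_inf; [exists d | move=> x /dE].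
Qed.

Section Plane.
Variable R : realType.
Implicit Types (z w l : R * R) (k s t : R).

Definition int_point z : bool := (z.1 \is a Num.int) && (z.2 \is a Num.int).

Lemma int_pointP z : reflect (exists m n : int, z = (m%:~R, n%:~R)) (int_point z).
Proof.
apply: (iffP andP) => [[/intrP[m z1] /intrP[n z2]] | [m [n ->]]].
  by exists m, n; apply: injective_projections.
by rewrite !intr_int.
Qed.

Lemma int_point0 : int_point 0. Proof. by rewrite /int_point rpred0. Qed.

Lemma int_point01 (x y : R) : x \in [:: 0; 1] -> y \in [:: 0; 1] -> int_point (x, y).
Proof.
by rewrite !inE => /orP[] /eqP -> /orP[] /eqP ->; rewrite /int_point /= ?rpred0 ?rpred1.
Qed.

Lemma int_pointB [z w] : int_point z -> int_point w -> int_point (z - w).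
Proof. by move=> /andP[? ?] /andP[? ?]; apply/andP; split; apply: rpredB. Qed.

Lemma int_pointN [z] : int_point z -> int_point (- z).
Proof. by move=> hz; rewrite -sub0r int_pointB ?int_point0. Qed.

Lemma int_pointD [z w] : int_point z -> int_point w -> int_point (z + w).
Proof. by move=> hz hw; rewrite -[w]opprK int_pointB ?int_pointN. Qed.

Lemma int_mul_pred_ge0 [x : R] : x \is a Num.int -> 0 <= x * (x - 1).
Proof. by move/intr_ler_sqr; rewrite mulrBr mulr1 subr_ge0 -expr2. Qed.

Lemma int01_cases (x : R) : x * (x - 1) = 0 -> x = 0 \/ x = 1.
Proof. by move/eqP; rewrite mulf_eq0 subr_eq0 => /orP[] /eqP; [left | right]. Qed.

Lemma int_window (x : R) (N : nat) : x \is a Num.int -> `|x| <= N%:R ->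
  exists i : 'I_N.*2.+1, x = i%:R - N%:R.
Proof.
case/intrP=> m -> le_mN.
have hm : (`|m| <= N%:Z)%R by rewrite -(ler_int R) intr_norm.
have lt_iN : (absz (m + N%:Z)%R < N.*2.+1)%N by lia.
exists (Ordinal lt_iN) => /=.
by rewrite natr_absz ger0_norm ?intrD ?addrK //; lia.
Qed.

Definition box_point (N : nat) (ij : 'I_N.*2.+1 * 'I_N.*2.+1) : R * R :=
  (ij.1%:R - N%:R, ij.2%:R - N%:R).

Lemma box_pointP (N : nat) l : int_point l -> `|l.1| <= N%:R -> `|l.2| <= N%:R ->
  exists ij, l = box_point N ij.
Proof.
case/andP=> l1 l2 /(int_window _ _ l1)[i ei] /(int_window _ _ l2)[j ej].
by exists (i, j); apply: injective_projections.
Qed.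

(** * The quadratic form and the distance to the lattice *)

Section PositiveDefiniteForm.
Variables A B C : R.
Hypothesis A_gt0 : 0 < A.
Hypothesis det_gt0 : 0 < A * B - C ^+ 2.

Definition qform z := A * z.1 ^+ 2 + 2 * C * (z.1 * z.2) + B * z.2 ^+ 2.
Definition qbil z w := A * z.1 * w.1 + C * (z.1 * w.2 + z.2 * w.1) + B * z.2 * w.2.
Definition qnorm z := Num.sqrt (qform z).

Lemma qform_ge0 z : 0 <= qform z.
Proof.
have e : A * qform z = (A * z.1 + C * z.2) ^+ 2 + (A * B - C ^+ 2) * z.2 ^+ 2.
  by rewrite /qform; ring.
rewrite -(pmulr_rge0 _ A_gt0) e.
by rewrite addr_ge0 ?sqr_ge0 // mulr_ge0 ?sqr_ge0 // ltW.
Qed.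

Lemma qform_coercive z :
  (A * B - C ^+ 2) * (z.1 ^+ 2 + z.2 ^+ 2) <= (A + B) * qform z.
Proof.
have -> : (A + B) * qform z = (A * B - C ^+ 2) * (z.1 ^+ 2 + z.2 ^+ 2)
    + (A * z.1 + C * z.2) ^+ 2 + (C * z.1 + B * z.2) ^+ 2.
  by rewrite /qform; ring.
by rewrite -addrA lerDl addr_ge0 ?sqr_ge0.
Qed.

Lemma qform_eq0 z : qform z = 0 -> z = 0.
Proof.
move=> z0; have := qform_coercive z; rewrite z0 mulr0 pmulr_rle0 // => le0.
have [z1 z2] : z.1 ^+ 2 = 0 /\ z.2 ^+ 2 = 0.
  by have := sqr_ge0 z.1; have := sqr_ge0 z.2; split; lra.
by apply: injective_projections; apply/eqP; rewrite -sqrf_eq0; apply/eqP.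
Qed.

Lemma qformZ k z : qform (k *: z) = k ^+ 2 * qform z.
Proof. by rewrite /qform scale_pairE /=; ring. Qed.

Lemma qformN z : qform (- z) = qform z.
Proof. by rewrite /qform /=; ring. Qed.

Lemma qformD z w : qform (z + w) = qform z + qform w + 2 * qbil z w.
Proof. by rewrite /qform /qbil /=; ring. Qed.

Lemma qbil_Cauchy_Schwarz z w : qbil z w ^+ 2 <= qform z * qform w.
Proof.
have -> : qform z * qform w =
    qbil z w ^+ 2 + (A * B - C ^+ 2) * (z.1 * w.2 - z.2 * w.1) ^+ 2.
  by rewrite /qform /qbil; ring.
by rewrite lerDl mulr_ge0 ?sqr_ge0 // ltW.
Qed.

Lemma qnorm_ge0 z : 0 <= qnorm z. Proof. exact: sqrtr_ge0. Qed.

Lemma qnorm_sqr z : qnorm z ^+ 2 = qform z.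
Proof. by rewrite sqr_sqrtr // qform_ge0. Qed.

Lemma qnorm_le z w : qform z <= qform w -> qnorm z <= qnorm w.
Proof. by move=> le_zw; rewrite ler_sqrt // qform_ge0. Qed.

Lemma qnorm_eqE z w : qnorm z = qnorm w <-> qform z = qform w.
Proof. by split=> [e | e]; [rewrite -!qnorm_sqr e | rewrite /qnorm e]. Qed.

Lemma qnormZ k z : qnorm (k *: z) = `|k| * qnorm z.
Proof. by rewrite /qnorm qformZ sqrtrM ?sqr_ge0 // sqrtr_sqr. Qed.

Lemma qnormN z : qnorm (- z) = qnorm z.
Proof. by rewrite /qnorm qformN. Qed.

Lemma qnormD z w : qnorm (z + w) <= qnorm z + qnorm w.
Proof.
have nz := qnorm_ge0 z; have nw := qnorm_ge0 w; have nzw := qnorm_ge0 (z + w).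
have bil_le : qbil z w <= qnorm z * qnorm w.
  have := qbil_Cauchy_Schwarz z w; rewrite -!qnorm_sqr -exprMn.
  have := mulr_ge0 nz nw; nra.
have := qformD z w; rewrite -!qnorm_sqr; nra.
Qed.

Lemma qnorm_triangle_eq y z s t : t != 0 ->
  qnorm z = s -> qnorm (y - z) = t - s -> qnorm y = t -> z = (s / t) *: y.
Proof.
move=> t0 nz nyz ny.
have : qform (t *: z - s *: y) =
    t ^+ 2 * qform z - t * s * (qform z + qform y - qform (y - z)) + s ^+ 2 * qform y.
  by rewrite /qform !scale_pairE /=; ring.
rewrite -(qnorm_sqr z) -(qnorm_sqr y) -(qnorm_sqr (y - z)) nz nyz ny.
have -> : t ^+ 2 * s ^+ 2 - t * s * (s ^+ 2 + t ^+ 2 - (t - s) ^+ 2) + s ^+ 2 * t ^+ 2 = 0.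
  by ring.
move/qform_eq0/subr0_eq => tz.
by rewrite mulrC -scalerA -tz scalerA mulVf // scale1r.
Qed.

Definition ldist z := inf [set qnorm (z - l) | l in [set l | int_point l]].

Lemma ldist_le z l : int_point l -> ldist z <= qnorm (z - l).
Proof.
move=> hl; apply: ge_inf; last by exists l.
by exists 0 => _ [l' _ <-]; apply: qnorm_ge0.
Qed.

Lemma ldist_min z l0 : int_point l0 ->
  (forall l, int_point l -> qnorm (z - l0) <= qnorm (z - l)) -> ldist z = qnorm (z - l0).
Proof.
by move=> hl0 min_l0; apply: inf_eq_min; [exists l0 | move=> _ [l hl <-]; apply: min_l0].
Qed.

Lemma B_gt0 : 0 < B.
Proof.
rewrite -(pmulr_rgt0 _ A_gt0); apply: lt_le_trans det_gt0 _.
by rewrite gerDl oppr_le0 sqr_ge0.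
Qed.

Lemma qform_coord_le z :
  z.1 ^+ 2 + z.2 ^+ 2 <= (A + B) / (A * B - C ^+ 2) * qform z.
Proof.
by rewrite mulrAC ler_pdivlMr // mulrC qform_coercive.
Qed.

Lemma int_point_near_box z : exists N : nat, forall l,
  int_point l -> qform (z - l) <= qform z -> exists ij, l = box_point N ij.
Proof.
have k_ge0 : 0 <= (A + B) / (A * B - C ^+ 2).
  by rewrite divr_ge0 // ltW // addr_gt0 // B_gt0.
have K_ge0 := mulr_ge0 k_ge0 (qform_ge0 z).
have norm_le_sqr (x : R) : `|x| <= 1 + x ^+ 2.
  by have := normr_ge0 x; rewrite -real_normK ?num_real; nra.
have /archi_boundP lt_N : 0 <= `|z.1| + `|z.2| + 1 + (A + B) / (A * B - C ^+ 2) * qform z.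
  by rewrite !addr_ge0.
exists (Num.Def.archi_bound (`|z.1| + `|z.2| + 1 + (A + B) / (A * B - C ^+ 2) * qform z)).
move=> l hl le_lz; apply: box_pointP => //; apply/ltW/(le_lt_trans _ lt_N).
  have sum_le := qform_coord_le (z - l).
  have := ler_wpM2l k_ge0 le_lz.
  have -> : l.1 = z.1 - (z - l).1 by rewrite /=; ring.
  have := ler_normB z.1 (z - l).1; have := norm_le_sqr (z - l).1.
  have := normr_ge0 z.2; have := sqr_ge0 (z - l).2; lra.
have sum_le := qform_coord_le (z - l).
have := ler_wpM2l k_ge0 le_lz.
have -> : l.2 = z.2 - (z - l).2 by rewrite /=; ring.
have := ler_normB z.2 (z - l).2; have := norm_le_sqr (z - l).2.
have := normr_ge0 z.1; have := sqr_ge0 (z - l).1; lra.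
Qed.

Lemma ldist_attained z : exists2 l, int_point l & ldist z = qnorm (z - l).
Proof.
have [N near_box] := int_point_near_box z.
have N_lt : (N < N.*2.+1)%N by lia.
pose c := Ordinal N_lt.
have [ij _ ij_min] :=
  @arg_minP _ R _ (c, c) xpredT (fun ij => qform (z - box_point N ij)) isT.
have box0 : box_point N (c, c) = 0 by rewrite /box_point /= subrr.
exists (box_point N ij); first by rewrite /int_point !rpredB ?natr_int.
apply: ldist_min => [|l hl]; first by rewrite /int_point !rpredB ?natr_int.
apply: qnorm_le; case: (leP (qform (z - l)) (qform z)) => [le_lz | lt_zl].
  by have [ij' ->] := near_box l hl le_lz; apply: ij_min.
by apply/ltW/(le_lt_trans _ lt_zl); have := ij_min (c, c) isT; rewrite box0 subr0.
Qed.

Lemma ldist_ge0 z : 0 <= ldist z.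
Proof. by have [l _ ->] := ldist_attained z; apply: qnorm_ge0. Qed.

Lemma ldistDr z l : int_point l -> ldist (z + l) = ldist z.
Proof.
move=> hl; rewrite /ldist; congr inf; apply/seteqP; split=> _ [l' hl' <-].
  by exists (l' - l); [apply: int_pointB | congr qnorm; ring].
by exists (l' + l); [apply: int_pointD | congr qnorm; ring].
Qed.

Lemma ldist_congr z w : int_point (z - w) -> ldist z = ldist w.
Proof. by move=> hzw; have := ldistDr w _ hzw; rewrite addrC subrK. Qed.

Lemma ldistN z : ldist (- z) = ldist z.
Proof.
rewrite /ldist; congr inf; apply/seteqP; split=> _ [l hl <-].
  by exists (- l); [apply: int_pointN | rewrite -qnormN; congr qnorm; ring].
by exists (- l); [apply: int_pointN | rewrite -qnormN; congr qnorm; ring].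
Qed.

Lemma ldistBr z l : int_point l -> ldist (z - l) = ldist z.
Proof. by move=> hl; rewrite ldistDr ?int_pointN. Qed.

Lemma ldistB z w : ldist (z - w) = ldist (w - z).
Proof. by rewrite -ldistN opprB. Qed.

Lemma ldistZ_minimal y k : qnorm y = ldist y -> `|k| <= 1 -> ldist (k *: y) = `|k| * qnorm y.
Proof.
wlog k_ge0 : k / 0 <= k => [wlog_k|].
  case: (lerP 0 k) => [|k_lt0]; first exact: wlog_k.
  move=> ny k_le1; rewrite -ldistN -scaleNr -normrN.
  by apply: wlog_k; rewrite ?normrN // oppr_ge0 ltW.
move=> ny; rewrite ger0_norm // => k_le1.
have -> : k * qnorm y = qnorm (k *: y - 0) by rewrite subr0 qnormZ ger0_norm.
apply: ldist_min => [|l hl]; first exact: int_point0.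
have := qnormD (y - k *: y) (k *: y - l); rewrite addrA subrK.
have -> : y - k *: y = (1 - k) *: y by rewrite scalerBl scale1r.
rewrite subr0 !qnormZ !ger0_norm ?subr_ge0 //.
by have := ldist_le y l hl; lra.
Qed.
Lemma ldist_split [y x s t] : 0 < t ->
  ldist y = t -> ldist x = s -> ldist (y - x) = t - s ->
  exists2 l, int_point l & qnorm (y - l) = t /\ int_point (x - (s / t) *: (y - l)).
Proof.
move=> t_gt0 dy dx dyx.
have [l1 hl1 e1] := ldist_attained x; have [l2 hl2 e2] := ldist_attained (y - x).
have split_yl : y - (l1 + l2) = (x - l1) + (y - x - l2) by ring.
have nyl : qnorm (y - (l1 + l2)) = t.
  apply/le_anti/andP; split; last by rewrite -dy ldist_le // int_pointD.
  by rewrite split_yl; apply: (le_trans (qnormD _ _)); rewrite -e1 -e2 dx dyx subrKC.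
exists (l1 + l2); first exact: int_pointD.
split=> //; have -> : (s / t) *: (y - (l1 + l2)) = x - l1.
  apply/esym/qnorm_triangle_eq => //; first by rewrite gt_eqF.
    by rewrite -e1.
  by rewrite -dyx e2; congr qnorm; ring.
by rewrite opprB addrC subrK.
Qed.

Lemma ldist_line_point [y l s t] : 0 < s < t -> qnorm y = t -> ldist y = t ->
  int_point l -> qnorm ((s / t) *: y - l) = s -> l = 0.
Proof.
move=> /andP[s_gt0 s_lt_t] ny dy hl nl.
have t_gt0 : 0 < t := lt_trans s_gt0 s_lt_t.
have ts_gt0 : 0 < (t - s) / t by rewrite divr_gt0 // subr_gt0.
have e : y - (s / t) *: y = ((t - s) / t) *: y.
  by rewrite -[X in X - _]scale1r -scalerBl; congr (_ *: _); field; rewrite gt_eqF.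
have nys : qnorm (y - (s / t) *: y) = t - s.
  by rewrite e qnormZ ger0_norm ?ltW // ny mulfVK // gt_eqF.
have nyl : qnorm (y - l) = t.
  apply/le_anti/andP; split; last by rewrite -dy ldist_le.
  have := qnormD (y - (s / t) *: y) ((s / t) *: y - l).
  by rewrite addrA subrK nys nl subrK.
have := qnorm_triangle_eq (y - l) (y - (s / t) *: y) (t - s) t.
have -> : y - l - (y - (s / t) *: y) = (s / t) *: y - l by ring.
rewrite gt_eqF // nys nyl nl; have -> : t - (t - s) = s by ring.
rewrite e => /(_ isT erefl erefl erefl)/eqP; rewrite -subr_eq0 -scalerBr.
by rewrite scaler_eq0 gt_eqF //= opprB addrC subrK => /eqP.
Qed.
(** * Segments of the quotient metric *)

Definition qsegment r h (g : R -> R * R) :=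
  [/\ int_point (g 0), int_point (g r - h) &
      forall s t, 0 <= s <= r -> 0 <= t <= r -> ldist (g s - g t) = `|s - t|].

Definition line_path r h l : R -> R * R := fun t => (t / r) *: (h - l).

Section Segments.
Variables (r : R) (h : R * R).
Hypothesis r_gt0 : 0 < r.
Hypothesis ldist_h : ldist h = r.

Lemma line_path_segment l : int_point l -> qnorm (h - l) = r ->
  qsegment r h (line_path r h l).
Proof.
move=> hl nl; have r0 : r != 0 by rewrite gt_eqF.
split=> [|| s t /andP[s0 sr] /andP[t0 tr]].
- by rewrite /line_path mul0r scale0r int_point0.
- by rewrite /line_path divff // scale1r addrC addKr int_pointN.
have -> : line_path r h l s - line_path r h l t = ((s - t) / r) *: (h - l).
  by rewrite /line_path -scalerBl mulrBl.
rewrite ldistZ_minimal ?nl ?ldistBr //.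
  by rewrite normrM normfV (gtr0_norm r_gt0) mulfVK.
by rewrite normrM normfV (gtr0_norm r_gt0) ler_pdivrMr // mul1r ler_norml; apply/andP; split; lra.
Qed.

Lemma line_path_inj [l l' s] : 0 < s < r -> int_point l -> int_point l' ->
  qnorm (h - l) = r -> qnorm (h - l') = r ->
  int_point (line_path r h l s - line_path r h l' s) -> l = l'.
Proof.
move=> s_bd hl hl' nl nl' hll'.
have /andP[s_gt0 _] := s_bd.
have e : line_path r h l' s - line_path r h l s = (s / r) *: (l - l').
  by rewrite /line_path -scalerBr; congr (_ *: _); ring.
have := ldist_line_point s_bd nl' _ (int_pointN hll').
rewrite opprB e ldistBr // ldist_h => /(_ erefl).
have -> : (s / r) *: (h - l') - (s / r) *: (l - l') = line_path r h l s.
  by rewrite /line_path -scalerBr; congr (_ *: _); ring.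
rewrite qnormZ nl ger0_norm ?divr_ge0 ?ltW // mulfVK ?gt_eqF // => /(_ erefl) /eqP.
by rewrite scaler_eq0 mulf_eq0 invr_eq0 !gt_eqF //= subr_eq0 => /eqP.
Qed.

Section OneSegment.
Variable g : R -> R * R.
Hypothesis g_seg : qsegment r h g.

Lemma qsegment_ldist [t] : 0 <= t <= r -> ldist (g t) = t /\ ldist (h - g t) = r - t.
Proof.
case: g_seg => g0 gr gd t_bd; have /andP[t0 tr] := t_bd.
have r0 : (0 : R) <= 0 <= r by apply/andP; split; lra.
have rr : 0 <= r <= r by apply/andP; split; lra.
split; first by rewrite -(ldistBr (g t) _ g0) gd // subr0 ger0_norm.
rewrite (@ldist_congr _ (g r - g t)) ?gd ?ger0_norm ?subr_ge0 //.
have e : h - g t - (g r - g t) = - (g r - h) by ring.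
by rewrite e int_pointN.
Qed.

Lemma qsegment_line_at [t] : 0 < t < r ->
  exists2 l, int_point l & qnorm (h - l) = r /\ int_point (g t - line_path r h l t).
Proof.
move=> /andP[t0 tr].
have t_bd : 0 <= t <= r by rewrite !ltW.
have [dt dht] := qsegment_ldist t_bd.
exact: ldist_split.
Qed.

Lemma qsegment_line_down [l s t] : 0 < s < t -> t < r -> int_point l -> qnorm (h - l) = r ->
  int_point (g t - line_path r h l t) -> int_point (g s - line_path r h l s).
Proof.
move=> /andP[s0 st] tr hl nl hgt.
have t0 := lt_trans s0 st.
have [|dt _] := @qsegment_ldist t; first by rewrite !ltW.
have [|ds _] := @qsegment_ldist s; first by rewrite ltW ?(ltW (lt_trans st tr)).
have dts : ldist (g t - g s) = t - s.
  by case: g_seg => _ _ ->; rewrite ?gtr0_norm ?subr_gt0 ?ltW ?(lt_trans st tr).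
have [m hm [nm hgs]] := ldist_split t0 dt ds dts.
have m_eq : m - (g t - line_path r h l t) = 0.
  have t_bd : 0 < t < r by rewrite t0.
  apply: (ldist_line_point t_bd nl); first by rewrite ldistBr.
    exact: int_pointB hm hgt.
  suff -> : (t / r) *: (h - l) - (m - (g t - line_path r h l t)) = g t - m by [].
  by rewrite /line_path; ring.
have -> : line_path r h l s = (s / t) *: (g t - m).
  move/subr0_eq: m_eq => ->; rewrite opprB addrC subrK /line_path scalerA.
  by congr (_ *: _); field; rewrite !gt_eqF.
exact: hgs.
Qed.

Lemma qsegment_line_path : exists2 l, int_point l &
  qnorm (h - l) = r /\ forall t, 0 <= t <= r -> int_point (g t - line_path r h l t).
Proof.
have mid_bd : 0 < r / 2 < r by have := r_gt0; rewrite !ltr_pdivlMr //; lra.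
have /andP[half_gt0 half_lt] := mid_bd.
have [l hl [nl mid]] := qsegment_line_at mid_bd.
exists l => //; split=> // t /andP[]; rewrite le_eqVlt => /orP[/eqP <- _ | t0].
  by case: g_seg; rewrite /line_path mul0r scale0r subr0.
rewrite le_eqVlt => /orP[/eqP -> | tr].
  case: g_seg => _ gr _; rewrite /line_path divff ?gt_eqF // scale1r.
  have -> : g r - (h - l) = (g r - h) + l by ring.
  exact: int_pointD.
case: (ltrgtP t (r / 2)) => [t_lt | t_gt | ->] //.
  by apply: (qsegment_line_down _ _ hl nl mid); rewrite ?t0 ?half_lt.
have t_bd : 0 < t < r by rewrite t0.
have [l' hl' [nl' hgt]] := qsegment_line_at t_bd.
suff <- : l' = l by [].
apply: (line_path_inj mid_bd) => //.
have -> : line_path r h l' (r / 2) - line_path r h l (r / 2) =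
  (g (r / 2) - line_path r h l (r / 2)) - (g (r / 2) - line_path r h l' (r / 2)) by ring.
by rewrite int_pointB // (qsegment_line_down _ _ hl' nl' hgt) ?half_gt0.
Qed.
End OneSegment.
End Segments.

(** * Holes of the lattice *)

Lemma qform_barycentric p0 p1 p2 c u v z : z = p0 + u *: (p1 - p0) + v *: (p2 - p0) ->
  (1 - u - v) * qform (z - p0) + u * qform (z - p1) + v * qform (z - p2) + qform (z - c) =
  (1 - u - v) * qform (c - p0) + u * qform (c - p1) + v * qform (c - p2).
Proof. by move=> ->; rewrite /qform !scale_pairE /=; ring. Qed.

Lemma ldist_sqr_circumcenter p0 p1 p2 c u v z :
  int_point p0 -> int_point p1 -> int_point p2 ->
  qform (c - p1) = qform (c - p0) -> qform (c - p2) = qform (c - p0) ->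
  0 <= u -> 0 <= v -> u + v <= 1 -> z = p0 + u *: (p1 - p0) + v *: (p2 - p0) ->
  ldist z ^+ 2 + qform (z - c) <= qform (c - p0).
Proof.
move=> h0 h1 h2 e1 e2 u0 v0 uv1 ez.
have d0 := ldist_ge0 z.
have d_le p : int_point p -> ldist z ^+ 2 <= qform (z - p).
  by move=> hp; rewrite -qnorm_sqr ler_sqr ?nnegrE ?qnorm_ge0 ?ldist_le.
have := qform_barycentric p0 p1 p2 c u v z ez; rewrite e1 e2.
have w0 : 0 <= 1 - u - v by lra.
have := ler_wpM2l w0 (d_le _ h0).
have := ler_wpM2l u0 (d_le _ h1); have := ler_wpM2l v0 (d_le _ h2).
lra.
Qed.

(* The Q-circumcentre of (0, 0), (1, 0), (0, 1): it solves
   A x + C y = A / 2 and C x + B y = B / 2. *)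
Definition lower_hole : R * R :=
  (B * (A - C) / (2 * (A * B - C ^+ 2)), A * (B - C) / (2 * (A * B - C ^+ 2))).
Definition upper_hole : R * R := (1, 1) - lower_hole.

Definition hole_excess l :=
  A * (l.1 * (l.1 - 1)) + B * (l.2 * (l.2 - 1)) + 2 * C * (l.1 * l.2).

Lemma lower_hole_sub l : qform (lower_hole - l) = qform lower_hole + hole_excess l.
Proof. by rewrite /qform /lower_hole /hole_excess /=; field; rewrite gt_eqF. Qed.

Lemma lower_hole_circumcenter :
  qform (lower_hole - (1, 0)) = qform lower_hole /\ qform (lower_hole - (0, 1)) = qform lower_hole.
Proof. by rewrite !lower_hole_sub /hole_excess /=; split; ring. Qed.

Lemma ldist_covering z : exists2 c, c = lower_hole \/ c = upper_hole &
  exists2 f, int_point f & ldist z ^+ 2 + qform (z - f - c) <= qform lower_hole.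
Proof.
have [e1 e2] := lower_hole_circumcenter.
have int10 : int_point (1, 0) by rewrite int_point01 // !inE eqxx ?orbT.
have int01 : int_point (0, 1) by rewrite int_point01 // !inE eqxx ?orbT.
have int11 : int_point (1, 1) by rewrite int_point01 // !inE eqxx ?orbT.
pose f : R * R := ((Num.floor z.1)%:~R, (Num.floor z.2)%:~R).
have hf : int_point f by rewrite /int_point !intr_int.
have frac_bd (a : R) : 0 <= a - (Num.floor a)%:~R < 1.
  by have := floorD1_gt a; have := floor_le a; rewrite intrD => ? ?; apply/andP; split; lra.
have /andP[x0 x1] := frac_bd z.1; have /andP[y0 y1] := frac_bd z.2.
case: (lerP (z.1 - f.1 + (z.2 - f.2)) 1) => [low | up].
  exists lower_hole; [by left | exists f => //].
  have := @ldist_sqr_circumcenter f (f + (1, 0)) (f + (0, 1)) (f + lower_hole)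
    (z.1 - f.1) (z.2 - f.2) z hf (int_pointD hf int10) (int_pointD hf int01).
  have -> : z - (f + lower_hole) = z - f - lower_hole by ring.
  have -> : f + lower_hole - f = lower_hole by ring.
  apply.
  - by have -> : f + lower_hole - (f + (1, 0)) = lower_hole - (1, 0) by ring.
  - by have -> : f + lower_hole - (f + (0, 1)) = lower_hole - (0, 1) by ring.
  - exact: x0.
  - exact: y0.
  - exact: low.
  - by rewrite !scale_pairE; apply: injective_projections => /=; ring.
exists upper_hole; [by right | exists f => //].
have := @ldist_sqr_circumcenter (f + (1, 1)) (f + (0, 1)) (f + (1, 0)) (f + upper_hole)
  (1 - (z.1 - f.1)) (1 - (z.2 - f.2)) z (int_pointD hf int11) (int_pointD hf int01)
  (int_pointD hf int10).
have -> : z - (f + upper_hole) = z - f - upper_hole by ring.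
have -> : f + upper_hole - (f + (1, 1)) = - lower_hole by rewrite /upper_hole; ring.
rewrite qformN; apply.
- have -> : f + upper_hole - (f + (0, 1)) = - (lower_hole - (1, 0)).
    by apply: injective_projections => /=; ring.
  by rewrite qformN.
- have -> : f + upper_hole - (f + (1, 0)) = - (lower_hole - (0, 1)).
    by apply: injective_projections => /=; ring.
  by rewrite qformN.
- by rewrite subr_ge0 ltW.
- by rewrite subr_ge0 ltW.
- lra.
- by rewrite !scale_pairE; apply: injective_projections => /=; ring.
Qed.

Lemma ldist_le_covering z : ldist z <= qnorm lower_hole.
Proof.
have [c _ [f _ le_z]] := ldist_covering z.
rewrite -ler_sqr ?nnegrE ?ldist_ge0 ?qnorm_ge0 // qnorm_sqr.
by have := qform_ge0 (z - f - c); lra.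
Qed.

Lemma ldist_eq_covering z : ldist z = qnorm lower_hole ->
  int_point (z - lower_hole) \/ int_point (z - upper_hole).
Proof.
move=> dz; have [c hc [f hf]] := ldist_covering z.
rewrite dz qnorm_sqr gerDl => le0.
have /qform_eq0 zfc : qform (z - f - c) = 0 by apply/le_anti; rewrite le0 qform_ge0.
have zc : z - c = f by rewrite -[z - c]subr0 -zfc; ring.
by case: hc zc => -> zc; [left | right]; rewrite zc.
Qed.

(* For A = a^2, B = b^2 and C = a b cos alpha this is 2 b cos alpha <= a <= b
   with alpha <= pi / 2. *)
Definition reduced := [/\ 0 <= C, 2 * C <= A & A <= B].

Section ReducedForm.
Hypothesis red : reduced.

Lemma hole_excess_gt0 [l] : int_point l -> l.1 * l.2 < 0 -> 0 < hole_excess l.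
Proof.
case: red => _ C2_le_A A_le_B; case/andP=> l1 l2 neg; have := A_gt0.
have P0 := int_mul_pred_ge0 l1; have Q0 := int_mul_pred_ge0 l2.
have S0 := int_mul_pred_ge0 (rpredD l1 l2).
have BQ : A * (l.2 * (l.2 - 1)) <= B * (l.2 * (l.2 - 1)) by rewrite ler_wpM2r.
have Cxy : A * (l.1 * l.2) <= 2 * C * (l.1 * l.2) by rewrite ler_nM2r.
have : 0 < A * ((l.1 + l.2) * (l.1 + l.2 - 1) - l.1 * l.2).
  by rewrite mulr_gt0 // subr_gt0 (lt_le_trans neg).
have -> : A * ((l.1 + l.2) * (l.1 + l.2 - 1) - l.1 * l.2) =
  A * (l.1 * (l.1 - 1)) + A * (l.2 * (l.2 - 1)) + A * (l.1 * l.2) by ring.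
rewrite /hole_excess; lra.
Qed.

Lemma hole_excess_ge0 l : int_point l -> 0 <= hole_excess l.
Proof.
move=> hl; case: (ltrP (l.1 * l.2) 0) => [neg | pos]; first exact/ltW/hole_excess_gt0.
case: red => C_ge0 _ _; case/andP: hl => l1 l2; rewrite /hole_excess.
have := mulr_ge0 (ltW A_gt0) (int_mul_pred_ge0 l1).
have := mulr_ge0 (ltW B_gt0) (int_mul_pred_ge0 l2).
have := mulr_ge0 C_ge0 pos; lra.
Qed.

Lemma hole_excess_eq0 [l] : int_point l -> hole_excess l = 0 ->
  l = (0, 0) \/ l = (1, 0) \/ l = (0, 1) \/ (C = 0 /\ l = (1, 1)).
Proof.
move=> hl e0; case: (ltrP (l.1 * l.2) 0) => [neg | pos].
  by have := hole_excess_gt0 hl neg; rewrite e0 ltxx.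
case: red => C_ge0 _ _; case/andP: hl e0 => l1 l2; rewrite /hole_excess => e0.
have := A_gt0; have := B_gt0; have P0 := int_mul_pred_ge0 l1; have Q0 := int_mul_pred_ge0 l2.
have CS0 := mulr_ge0 C_ge0 pos.
have AP0 := mulr_ge0 (ltW A_gt0) P0; have BQ0 := mulr_ge0 (ltW B_gt0) Q0.
have [AP BQ CS] : [/\ A * (l.1 * (l.1 - 1)) = 0, B * (l.2 * (l.2 - 1)) = 0 & C * (l.1 * l.2) = 0].
  by split; lra.
move/eqP: AP; rewrite mulf_eq0 (gt_eqF A_gt0) => /eqP/int01_cases x01.
move/eqP: BQ; rewrite mulf_eq0 (gt_eqF B_gt0) => /eqP/int01_cases y01.
case: l {l1 l2 pos e0 P0 Q0 CS0 AP0 BQ0} x01 y01 CS => x y /= [] -> [] ->.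
- by left.
- by right; right; left.
- by right; left.
- by rewrite !mulr1 => C0 _ _; right; right; right.
Qed.

Lemma ldist_lower_hole : ldist lower_hole = qnorm lower_hole.
Proof.
rewrite -[in RHS](subr0 lower_hole); apply: ldist_min => [|l hl]; first exact: int_point0.
by apply: qnorm_le; rewrite subr0 lower_hole_sub lerDl hole_excess_ge0.
Qed.

Lemma ldist_upper_hole : ldist upper_hole = qnorm lower_hole.
Proof.
rewrite /upper_hole ldistB ldistBr ?ldist_lower_hole //.
by rewrite int_point01 // !inE eqxx ?orbT.
Qed.

Definition hole_vertices : seq (R * R) :=
  [:: (0, 0); (1, 0); (0, 1)] ++ (if C == 0 then [:: (1, 1)] else [::]).

Lemma hole_vertices_uniq : uniq hole_vertices.
Proof.
have n01 : (0 == 1 :> R) = false by rewrite eq_sym oner_eq0.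
by rewrite /hole_vertices; case: eqP => _ /=; rewrite !inE !xpair_eqE n01 ?andbF.
Qed.

Lemma hole_verticesP l :
  l \in hole_vertices <-> int_point l /\ qnorm (lower_hole - l) = qnorm lower_hole.
Proof.
have vertex (x y : R) : x \in [:: 0; 1] -> y \in [:: 0; 1] -> C * (x * y) = 0 ->
    int_point (x, y) /\ hole_excess (x, y) = 0.
  move=> hx hy Cxy; split; first exact: int_point01.
  have bit (u : R) : u \in [:: 0; 1] -> u * (u - 1) = 0.
    by rewrite !inE => /orP[] /eqP ->; ring.
  by rewrite /hole_excess /= (bit x) ?(bit y) // -mulrA Cxy; ring.
have excess0 l' : qform lower_hole + hole_excess l' = qform lower_hole + 0 <->
    hole_excess l' = 0 by split=> [/addrI | ->].
rewrite qnorm_eqE lower_hole_sub -[RHS in _ = RHS]addr0 excess0.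
split=> [|[hl /(hole_excess_eq0 hl)]].
  rewrite mem_cat !inE -!orbA => /or4P[/eqP -> | /eqP -> | /eqP -> |];
    try by apply: vertex; rewrite ?inE ?eqxx ?orbT ?mul0r ?mulr0.
  case: (C =P 0) => // C0; rewrite inE => /eqP ->.
  by apply: vertex; rewrite ?inE ?eqxx ?orbT // C0 mul0r.
move=> [-> | [-> | [-> | [C0 ->]]]]; rewrite mem_cat !inE ?eqxx ?orbT //.
by rewrite C0 eqxx inE eqxx orbT.
Qed.

Lemma upper_hole_verticesP l :
  l \in [seq (1, 1) - v | v <- hole_vertices] <->
  int_point l /\ qnorm (upper_hole - l) = qnorm lower_hole.
Proof.
have int11 : int_point (1, 1) by rewrite int_point01 // !inE eqxx ?orbT.
have -> : upper_hole - l = - (lower_hole - ((1, 1) - l)) by rewrite /upper_hole; ring.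
have mem_sub : (l \in [seq (1, 1) - v | v <- hole_vertices]) = ((1, 1) - l \in hole_vertices).
  by rewrite -[RHS](mem_map (subrI (1, 1))) subKr.
rewrite qnormN mem_sub hole_verticesP; split=> -[hl e]; split=> //.
  by rewrite -(subKr (1, 1) l) int_pointB.
exact: int_pointB.
Qed.

Lemma lower_hole1_gt0 : 0 < lower_hole.1.
Proof.
case: red => C_ge0 C2_le_A _; have := A_gt0 => A_gt0'.
by rewrite divr_gt0 ?mulr_gt0 ?B_gt0 // ?subr_gt0; lra.
Qed.

Lemma covering_radius_gt0 : 0 < qnorm lower_hole.
Proof.
rewrite lt_neqAle qnorm_ge0 andbT eq_sym sqrtr_eq0; apply/negP => le0.
have /qform_eq0 h0 : qform lower_hole = 0 by apply/le_anti; rewrite le0 qform_ge0.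
by have := lower_hole1_gt0; rewrite h0 ltxx.
Qed.

Lemma upper_hole_eq : C = 0 -> upper_hole = lower_hole.
Proof.
move=> C0; rewrite /upper_hole /lower_hole C0.
by apply: injective_projections => /=; field; rewrite !gt_eqF ?B_gt0.
Qed.

Lemma holes_distinct : 0 < C -> ~~ int_point (lower_hole - upper_hole).
Proof.
move=> C_gt0; apply/negP => /andP[/intrP[m em] _].
case: red => _ C2_le_A A_le_B; have := lower_hole1_gt0; have := A_gt0 => *.
have e : (lower_hole - upper_hole).1 = C * (C - B) / (A * B - C ^+ 2).
  by rewrite /upper_hole /lower_hole /=; field; rewrite gt_eqF.
have m_lt0 : m%:~R < 0 :> R.
  by rewrite -em e pmulr_llt0 ?invr_gt0 // pmulr_rlt0 // subr_lt0; lra.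
have e' : (lower_hole - upper_hole).1 = 2 * lower_hole.1 - 1 by rewrite /upper_hole /=; ring.
have m_gtN1 : -1 < m%:~R :> R by rewrite -em e'; lra.
have : 0 < (m + 1)%:~R :> R by rewrite intrD; lra.
by move: m_lt0; rewrite ltrz0 ltr0z; lia.
Qed.

End ReducedForm.
(** * The flat torus *)

Section Torus.
Variables a b al : R.
Hypotheses (a_gt0 : 0 < a) (b_gt0 : 0 < b) (sin_gt0 : 0 < sin al).
Hypotheses (A_def : A = a ^+ 2) (B_def : B = b ^+ 2) (C_def : C = a * b * cos al).

Definition frame w : R * R := (w.1 * a + w.2 * (b * cos al), w.2 * (b * sin al)).
Definition coords z : R * R :=
  ((z.1 - z.2 / (b * sin al) * (b * cos al)) / a, z.2 / (b * sin al)).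

Lemma frameK : cancel frame coords.
Proof.
by move=> w; apply: injective_projections; rewrite /frame /coords /=; field; rewrite !gt_eqF.
Qed.

Lemma coordsK : cancel coords frame.
Proof.
by move=> z; apply: injective_projections; rewrite /frame /coords /=; field; rewrite !gt_eqF.
Qed.

Lemma frameB w w' : frame (w - w') = frame w - frame w'.
Proof. by apply: injective_projections; rewrite /frame /=; ring. Qed.

Lemma coordsB z z' : coords (z - z') = coords z - coords z'.
Proof. by apply: (can_inj frameK); rewrite frameB !coordsK. Qed.

Lemma qform_frame w : qform w = (frame w).1 ^+ 2 + (frame w).2 ^+ 2.
Proof.
rewrite /qform /frame A_def B_def C_def /=.
have -> : (w.2 * (b * sin al)) ^+ 2 = (w.2 * b) ^+ 2 * sin al ^+ 2 by ring.
by rewrite sin2cos2; ring.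
Qed.

Lemma qnorm_frame w : qnorm w = Num.sqrt ((frame w).1 ^+ 2 + (frame w).2 ^+ 2).
Proof. by rewrite /qnorm qform_frame. Qed.

Lemma tor_distE x y : tor_dist a b al x y = ldist (coords (x - y)).
Proof.
rewrite /tor_dist /ldist; congr inf; apply/seteqP; split=> r.
  move=> [m [n ->]]; exists (m%:~R, n%:~R); first by apply/int_pointP; exists m, n.
  by rewrite qnorm_frame frameB coordsK.
move=> [l /int_pointP[m [n ->]] <-]; exists m, n.
by rewrite qnorm_frame frameB coordsK.
Qed.

Lemma tor_eqE x y : tor_eq a b al x y <-> int_point (coords (x - y)).
Proof.
split=> [[m [n [e1 e2]]] | /int_pointP[m [n e]]].
  have -> : x - y = frame (m%:~R, n%:~R) by apply: injective_projections.
  by rewrite frameK; apply/int_pointP; exists m, n.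
have exy : x - y = frame (m%:~R, n%:~R) by rewrite -e coordsK.
by exists m, n; split; [exact: (congr1 fst exy) | exact: (congr1 snd exy)].
Qed.

Lemma coordsN z : coords (- z) = - coords z.
Proof. by apply: injective_projections; rewrite /coords /=; ring. Qed.

Lemma tor_eq_sym x y : tor_eq a b al x y -> tor_eq a b al y x.
Proof. by rewrite !tor_eqE -opprB coordsN => /int_pointN; rewrite opprK. Qed.

Lemma coords_sub p x y : coords (x - y) = coords (x - p) - coords (y - p).
Proof. by rewrite -coordsB; congr coords; ring. Qed.

Lemma coords_frame p h : coords (p + frame h - p) = h.
Proof. by rewrite [p + _]addrC addrK frameK. Qed.

Lemma tor_dist_base p x : tor_dist a b al p x = ldist (coords (x - p)).
Proof. by rewrite tor_distE -opprB coordsN ldistN. Qed.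

Lemma segmentE p h g : segment a b al p (p + frame h) g <->
  qsegment (ldist h) h (fun t => coords (g t - p)).
Proof.
rewrite /segment /qsegment tor_dist_base coords_frame !tor_eqE.
rewrite (coords_sub p _ (p + frame h)) coords_frame.
split=> [[g0 [gL gd]] | [g0 gL gd]].
  by split=> // s t hs ht; rewrite -coords_sub -tor_distE gd.
by do 2!split=> //; move=> s t hs ht; rewrite tor_distE (coords_sub p) gd.
Qed.

Lemma same_segmentE p h g g' : same_segment a b al p (p + frame h) g g' <->
  forall t, 0 <= t <= ldist h -> int_point (coords (g t - p) - coords (g' t - p)).
Proof.
rewrite /same_segment tor_dist_base coords_frame.
by split=> same t ht; [rewrite -coords_sub -tor_eqE | rewrite tor_eqE (coords_sub p)]; apply: same.
Qed.

Lemma n_segments_nearest p h (L : seq (R * R)) : 0 < ldist h -> uniq L ->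
  (forall l, l \in L <-> int_point l /\ qnorm (h - l) = ldist h) ->
  n_segments a b al p (p + frame h) (size L).
Proof.
move=> r_gt0 uL memL.
pose path (i : 'I_(size L)) t := p + frame (line_path (ldist h) h (nth 0 L i) t).
have path_coords i : (fun t => coords (path i t - p)) = line_path (ldist h) h (nth 0 L i).
  by apply: funext => t; apply: coords_frame.
have nthL (i : 'I_(size L)) : int_point (nth 0 L i) /\ qnorm (h - nth 0 L i) = ldist h.
  by apply/memL; rewrite mem_nth.
exists path; split; [|split].
- move=> i; apply/segmentE; rewrite path_coords.
  by have [hl nl] := nthL i; apply: line_path_segment.
- move=> i j /same_segmentE same; apply/val_inj/eqP.
  have mid : 0 < ldist h / 2 < ldist h by rewrite divr_gt0 //= ltr_pdivrMr // ltr_pMr // ltr1n.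
  have [hli nli] := nthL i; have [hlj nlj] := nthL j.
  rewrite -(nth_uniq 0 _ _ uL) ?ltn_ord //; apply/eqP.
  apply: (line_path_inj _ _ r_gt0 erefl mid) => //.
  have /andP[mid0 mid1] := mid.
  by have := same (ldist h / 2); rewrite /path !coords_frame; apply; rewrite !ltW.
move=> g /segmentE /(qsegment_line_path _ _ r_gt0 erefl) [l hl [nl gl]].
have lL : l \in L by apply/memL.
have iL : (index l L < size L)%N by rewrite index_mem.
exists (Ordinal iL); apply/same_segmentE => t ht.
by rewrite coords_frame /= nth_index //; apply: gl.
Qed.

Lemma tor_card1 (P : R * R -> Prop) q :
  P q -> (forall x, P x -> tor_eq a b al x q) -> tor_card a b al P 1.
Proof.
move=> Pq near; exists (fun=> q); split=> //; split=> [i j _ | x /near xq].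
  by rewrite !ord1.
by exists ord0.
Qed.

Lemma tor_card2 (P : R * R -> Prop) q q' : P q -> P q' -> ~ tor_eq a b al q q' ->
  (forall x, P x -> tor_eq a b al x q \/ tor_eq a b al x q') -> tor_card a b al P 2.
Proof.
move=> Pq Pq' qq' near.
exists (fun i : 'I_2 => if val i == 0%N then q else q'); split; [|split].
- by move=> i; case: ifP.
- move=> [[|[|i]] hi] [[|[|j]] hj] //= qij; apply: val_inj => //=.
  by exfalso; apply/qq'/tor_eq_sym.
move=> x /near [xq | xq']; first by exists ord0.
by exists (Ordinal (isT : (1 < 2)%N)).
Qed.

Section ReducedTorus.
Hypothesis red : reduced.
Variable p : R * R.

Lemma farthestE x : farthest a b al p x <-> ldist (coords (x - p)) = qnorm lower_hole.
Proof.
rewrite /farthest; split=> [far | dx y].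
  apply/le_anti; rewrite ldist_le_covering /=.
  by have := far (p + frame lower_hole); rewrite !tor_dist_base coords_frame ldist_lower_hole.
by rewrite !tor_dist_base dx ldist_le_covering.
Qed.

Lemma farthest_lower_hole : farthest a b al p (p + frame lower_hole).
Proof. by apply/farthestE; rewrite coords_frame ldist_lower_hole. Qed.

Lemma farthest_upper_hole : farthest a b al p (p + frame upper_hole).
Proof. by apply/farthestE; rewrite coords_frame ldist_upper_hole. Qed.

Lemma farthest_holes x : farthest a b al p x ->
  tor_eq a b al x (p + frame lower_hole) \/ tor_eq a b al x (p + frame upper_hole).
Proof.
move/farthestE/ldist_eq_covering; rewrite !tor_eqE.
rewrite (coords_sub p x (p + frame lower_hole)) (coords_sub p x (p + frame upper_hole)).
by rewrite !coords_frame.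
Qed.

Lemma lower_hole_segments : n_segments a b al p (p + frame lower_hole) (size hole_vertices).
Proof.
apply: n_segments_nearest; first by rewrite ldist_lower_hole //; apply: covering_radius_gt0.
  exact: hole_vertices_uniq.
by move=> l; rewrite ldist_lower_hole //; apply: hole_verticesP.
Qed.

Lemma upper_hole_segments : n_segments a b al p (p + frame upper_hole) (size hole_vertices).
Proof.
rewrite -(size_map (fun v : R * R => (1, 1) - v)); apply: n_segments_nearest.
- by rewrite ldist_upper_hole //; apply: covering_radius_gt0.
- by rewrite map_inj_uniq ?hole_vertices_uniq //; apply: subrI.
- by move=> l; rewrite ldist_upper_hole //; exact: (upper_hole_verticesP red l).
Qed.

Lemma tor_card_farthest_rect : C = 0 ->
  tor_card a b al (F a b al p) 1 /\ tor_card a b al (Fn a b al p 4) 1.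
Proof.
move=> C0; have four : size hole_vertices = 4 by rewrite /hole_vertices C0 eqxx.
have near x : farthest a b al p x -> tor_eq a b al x (p + frame lower_hole).
  by move/farthest_holes; rewrite upper_hole_eq // => -[].
split; apply: (tor_card1 _ (p + frame lower_hole)).
- exact: farthest_lower_hole.
- exact: near.
- by split; [exact: farthest_lower_hole | by have := lower_hole_segments; rewrite four].
- by move=> x [/near].
Qed.

Lemma tor_card_farthest_oblique : 0 < C ->
  tor_card a b al (F a b al p) 2 /\ tor_card a b al (Fn a b al p 3) 2.
Proof.
move=> C_gt0; have three : size hole_vertices = 3 by rewrite /hole_vertices gt_eqF.
have distinct : ~ tor_eq a b al (p + frame lower_hole) (p + frame upper_hole).
  by rewrite tor_eqE (coords_sub p) !coords_frame; apply/negP/holes_distinct.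
split; apply: (tor_card2 _ _ _ _ _ distinct).
- exact: farthest_lower_hole.
- exact: farthest_upper_hole.
- exact: farthest_holes.
- by split; [exact: farthest_lower_hole | by have := lower_hole_segments; rewrite three].
- by split; [exact: farthest_upper_hole | by have := upper_hole_segments; rewrite three].
- by move=> x [/farthest_holes].
Qed.

End ReducedTorus.

End Torus.

End PositiveDefiniteForm.
End Plane.

Lemma torus_gram_det_gt0 {R : realType} [a b al : R] :
  0 < a -> 0 < b -> 0 < sin al -> 0 < a ^+ 2 * b ^+ 2 - (a * b * cos al) ^+ 2.
Proof.
move=> a_gt0 b_gt0 sin_gt0.
have -> : a ^+ 2 * b ^+ 2 - (a * b * cos al) ^+ 2 = (a * b * sin al) ^+ 2.
  by rewrite !exprMn sin2cos2; ring.
by rewrite exprn_gt0 // !mulr_gt0.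
Qed.

Lemma torus_reduced {R : realType} [a b al : R] :
  0 < a -> 0 <= cos al -> 2 * b * cos al <= a -> a <= b ->
  reduced R (a ^+ 2) (b ^+ 2) (a * b * cos al).
Proof.
move=> a_gt0 cos_ge0 cos_le a_le_b; split.
- by rewrite !mulr_ge0 // ltW // (lt_le_trans a_gt0).
- have -> : 2 * (a * b * cos al) = a * (2 * b * cos al) by ring.
  by rewrite expr2 ler_wpM2l // ltW.
- by rewrite ler_sqr // nnegrE ltW // (lt_le_trans a_gt0).
Qed.

Theorem mainTheorem2 (R : realType) (a b alpha : R) (p : R * R) :
  0 < a -> 0 < b -> 0 < alpha -> alpha <= pi / 2 ->
  2 * b * cos alpha <= a -> a <= b ->
  (alpha = pi / 2 ->
     tor_card a b alpha (F a b alpha p) 1 /\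
     tor_card a b alpha (Fn a b alpha p 4) 1) /\
  (alpha < pi / 2 ->
     tor_card a b alpha (F a b alpha p) 2 /\
     tor_card a b alpha (Fn a b alpha p 3) 2).
Proof.
move=> a_gt0 b_gt0 al_gt0 al_le cos_le a_le_b.
have pi_gt0 := @pi_gt0 R.
have sin_gt0 : 0 < sin alpha by apply: sin_gt0_pi; apply/andP; split; lra.
have cos_ge0 : 0 <= cos alpha by apply: cos_ge0_pihalf; apply/andP; split; lra.
have A_gt0 : 0 < a ^+ 2 by rewrite exprn_gt0.
have det_gt0 := torus_gram_det_gt0 a_gt0 b_gt0 sin_gt0.
have red := torus_reduced a_gt0 cos_ge0 cos_le a_le_b.
split=> [al_eq | al_lt].
  apply: (tor_card_farthest_rect _ _ _ _ A_gt0 det_gt0 _ _ _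
            a_gt0 b_gt0 sin_gt0 erefl erefl erefl red).
  by rewrite al_eq cos_pihalf mulr0.
apply: (tor_card_farthest_oblique _ _ _ _ A_gt0 det_gt0 _ _ _
          a_gt0 b_gt0 sin_gt0 erefl erefl erefl red).
by rewrite !mulr_gt0 // cos_gt0_pihalf //; apply/andP; split; lra.
Qed.
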